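(* Let $\mathbf{x}_1,\dots,\mathbf{x}_n$ be examples, let $f$ be a feature map sending each example to a vector in $\mathbb{R}^d$, and let $W^I=(\mathbf{w}^I_1,\dots,\mathbf{w}^I_n)\in\mathbb{R}^{d\times n}$. Each example $\mathbf{x}_i$ has instance label $y_i^I=i$ and a target label $y_i^F\in\{1,\dots,F\}$, where every target class contains exactly $z$ examples, so that $zF=n$. Define \[\Pr\{y_i^I\mid f(\mathbf{x}_i),W^I\}=\frac{\exp(f(\mathbf{x}_i)^\top\mathbf{w}^I_{y_i^I})}{\sum_{j=1}^n\exp(f(\mathbf{x}_i)^\top\mathbf{w}^I_j)},\qquad \Pr\{y_i^F\mid f(\mathbf{x}_i),W^I\}=\frac{\exp(f(\mathbf{x}_i)^\top\bar{\mathbf{w}}^I_{y_i^F})}{\sum_{s=1}^F\exp(f(\mathbf{x}_i)^\top\bar{\mathbf{w}}^I_s)},\] where $\bar{\mathbf{w}}^I_s=\frac1z\sum_{j:\,y_j^F=s}\mathbf{w}^I_j$. If $\Pr\{y_i^I\mid f(\mathbf{x}_i),W^I\}\ge\alpha$ for all $i$, then for all $i$, \[\Pr\{y_i^F\mid f(\mathbf{x}_i),W^I\}\ge z\alpha\exp\big(f(\mathbf{x}_i)^\top(\bar{\mathbf{w}}^I_{y_i^F}-\mathbf{w}^I_{y_i^I})\big).\]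
   Context: This setting models instance classification: each of the $n$ examples is treated as its own class, $f$ is the feature extractor (the convolutional layers of a network) and $W^I$ is the weight matrix of the final fully-connected layer, with no bias term. The target-class probability is computed with the class proxy $\bar{\mathbf{w}}^I_s$, the mean of the instance weight vectors belonging to target class $s$. *)

From HB Require Import structures.
From mathcomp Require Import all_boot all_order all_algebra.
From mathcomp Require Import reals.
From mathcomp Require Import sequences exp.
Set Implicit Arguments. Unset Strict Implicit. Unset Printing Implicit Defensive.
Import Order.TTheory GRing.Theory Num.Theory.
Local Open Scope ring_scope.

Definition dotv (R : realType) (d : nat) (u v : 'cV[R]_d) : R :=
  \sum_(k < d) u k 0 * v k 0.

Definition wbar (R : realType) (d n F : nat) (z : nat)
  (W : 'M[R]_(d, n)) (yF : 'I_n -> 'I_F) (s : 'I_F) : 'cV[R]_d :=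
  (z%:R)^-1 *: \sum_(j < n | yF j == s) col j W.

(* Pr{ y_i^I | f(x_i), W^I } with y_i^I = i *)
Definition prob_inst (R : realType) (d n : nat) (W : 'M[R]_(d, n))
  (fx : 'cV[R]_d) (i : 'I_n) : R :=
  expR (dotv fx (col i W)) / \sum_(j < n) expR (dotv fx (col j W)).

Definition prob_target (R : realType) (d n F z : nat) (W : 'M[R]_(d, n))
  (yF : 'I_n -> 'I_F) (fx : 'cV[R]_d) (s : 'I_F) : R :=
  expR (dotv fx (wbar z W yF s)) /
    \sum_(t < F) expR (dotv fx (wbar z W yF t)).

From HB Require Import structures.
From mathcomp Require Import all_boot all_order all_algebra.
From mathcomp Require Import reals.
From mathcomp Require Import sequences exp.
Set Implicit Arguments. Unset Strict Implicit. Unset Printing Implicit Defensive.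
Import Order.TTheory GRing.Theory Num.Theory.
Local Open Scope ring_scope.

(* Write a_j = f(x_i)^T w_j.  Then f(x_i)^T wbar_s is the mean of the a_j over
   class s, so Jensen's inequality for exp bounds z exp(f(x_i)^T wbar_s) by the
   sum of exp(a_j) over that class; summing over classes, z times the target
   denominator is at most the instance denominator.  Hence
   Pr{y^F} >= z exp(f(x_i)^T wbar) / sum_j exp(a_j)
           = z exp(f(x_i)^T (wbar - w_i)) Pr{y^I} >= z alpha exp(...). *)

Section InnerProduct.

Variables (R : realType) (d : nat) (u : 'cV[R]_d).

Lemma dotv0r : dotv u 0 = 0.
Proof. by rewrite /dotv big1 // => k _; rewrite mxE mulr0. Qed.

Lemma dotvDr v w : dotv u (v + w) = dotv u v + dotv u w.
Proof. by rewrite /dotv -big_split; apply: eq_bigr => k _; rewrite mxE mulrDr. Qed.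

Lemma dotvZr c v : dotv u (c *: v) = c * dotv u v.
Proof. by rewrite /dotv mulr_sumr; apply: eq_bigr => k _; rewrite mxE mulrCA. Qed.

Lemma dotvBr v w : dotv u (v - w) = dotv u v - dotv u w.
Proof. by rewrite dotvDr -scaleN1r dotvZr mulN1r. Qed.

Lemma dotv_sumr (I : finType) (P : pred I) (v : I -> 'cV[R]_d) :
  dotv u (\sum_(j | P j) v j) = \sum_(j | P j) dotv u (v j).
Proof. exact: (big_morph _ dotvDr dotv0r). Qed.

End InnerProduct.

Section JensenExp.

Variable R : realType.

(* The tangent line of exp at the mean m lies below exp and averages to exp m. *)
Lemma jensen_expR (I : finType) (P : pred I) (a : I -> R) :
  #|P|%:R * expR (#|P|%:R^-1 * \sum_(j | P j) a j) <= \sum_(j | P j) expR (a j).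
Proof.
have [P0 | P_gt0] := posnP #|P|.
  by rewrite P0 mul0r big_pred0 // => j; apply: card0_eq P0 j.
set m := _^-1 * _.
have sum_dev0 : \sum_(j | P j) (a j - m) = 0.
  rewrite sumrB sumr_const -mulr_natl /m mulrA divff ?mul1r ?subrr //.
  by rewrite pnatr_eq0 -lt0n.
have tangent j : expR m * (1 + (a j - m)) <= expR (a j).
  rewrite -{2}(subrK m (a j)) expRD mulrC ler_pM2r ?expR_gt0 //.
  exact: expR_ge1Dx.
apply: le_trans (ler_sum _ (fun j _ => tangent j)).
rewrite -mulr_sumr big_split /= sum_dev0 addr0 sumr_const mulrC; exact: lexx.
Qed.

Lemma expR_class_means_le (I J : finType) (c : I -> J) (z : nat) (a : I -> R) :
  (forall t, #|[pred j | c j == t]| = z) ->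
  z%:R * \sum_t expR (z%:R^-1 * \sum_(j | c j == t) a j) <= \sum_j expR (a j).
Proof.
move=> hclass; rewrite (partition_big c xpredT) //= mulr_sumr.
by apply: ler_sum => t _; rewrite -(hclass t); apply: jensen_expR.
Qed.

End JensenExp.

Section ClassProxy.

Variables (R : realType) (d n F z : nat) (W : 'M[R]_(d, n)) (yF : 'I_n -> 'I_F).
Variable fx : 'cV[R]_d.

Lemma dotv_wbar s :
  dotv fx (wbar z W yF s) = z%:R^-1 * \sum_(j | yF j == s) dotv fx (col j W).
Proof. by rewrite /wbar dotvZr dotv_sumr. Qed.

Lemma prob_target_ge s :
  (forall t, #|[set j | yF j == t]| = z) ->
  z%:R * expR (dotv fx (wbar z W yF s)) / \sum_j expR (dotv fx (col j W))
    <= prob_target z W yF fx s.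
Proof.
move=> hclass; rewrite /prob_target.
set Sn := \sum_(j < n) _; set SF := \sum_(t < F) _.
have SF_gt0 : 0 < SF.
  rewrite /SF (bigD1 s) //= ltr_pwDl ?expR_gt0 // sumr_ge0 // => t _.
  exact: expR_ge0.
have SF_le : z%:R * SF <= Sn.
  rewrite /SF; under eq_bigr do rewrite dotv_wbar.
  by apply: expR_class_means_le => t; rewrite -(hclass t) cardsE.
have [-> | Sn_neq0] := eqVneq Sn 0.
  by rewrite invr0 mulr0 divr_ge0 ?expR_ge0 ?ltW.
have Sn_gt0 : 0 < Sn by rewrite lt0r Sn_neq0 sumr_ge0 // => j _; apply: expR_ge0.
rewrite ler_pdivlMr // mulrAC ler_pdivrMr // mulrAC [_ * Sn]mulrC.
by rewrite ler_pM2r ?expR_gt0.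
Qed.

End ClassProxy.

Theorem lemma1 (R : realType) (X : Type) (d n F z : nat)
  (x : 'I_n -> X) (f : X -> 'cV[R]_d) (W : 'M[R]_(d, n))
  (yF : 'I_n -> 'I_F)
  (hclass : forall s : 'I_F, #|[set j : 'I_n | yF j == s]| = z)
  (alpha : R)
  (hinst : forall i : 'I_n, alpha <= prob_inst W (f (x i)) i) :
  forall i : 'I_n,
    z%:R * alpha * expR (dotv (f (x i)) (wbar z W yF (yF i) - col i W))
      <= prob_target z W yF (f (x i)) (yF i).
Proof.
move=> i; apply: le_trans (prob_target_ge W _ _ hclass).
rewrite dotvBr expRB.
set ea := expR (dotv _ (col i W)); set eb := expR (dotv _ (wbar _ _ _ _)).
set Sn := \sum_(j < n) _.
have inst_le : alpha <= ea / Sn := hinst i.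
have ratio : ea / Sn * (eb / ea) = eb / Sn.
  by rewrite mulrC mulrA mulfVK ?gt_eqF ?expR_gt0.
by rewrite -!mulrA -ratio ler_wpM2l // ler_wpM2r // divr_ge0 ?expR_ge0.
Qed.
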